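(* Let $X$ be a bounded subset of $\mathbb{R}^n$ and $\hat X$ a finite subset of $\mathbb{R}^n$. Let $v:X\to\mathbb{R}$ be Lipschitz continuous with constant $L_v$ with respect to the Euclidean norm, and let $a\geq L_v$. Let $\mathcal Z_{\hat X}$ be the complete semimodule of $\overline{\mathbb{R}}_{\max}^X$ generated by the functions $z_{\hat x}(x)=-a\|x-\hat x\|_1$ ($x\in X$), $\hat x\in\hat X$. Then \[ \|v-P^{-(\mathcal Z_{\hat X})}v\|_\infty\leq n(a+L_v)\rho_X(\hat X). \]
   Context: $\|x\|_1=\sum_i|x_i|$. $\rho_X(P)=\sup_{x\in X}\inf_{p\in P}\|x-p\|_2$. $P^{-(\mathcal Z_{\hat X})}v=\min\{g\in -\mathcal Z_{\hat X}: g\geq v\}$, explicitly $P^{-(\mathcal Z_{\hat X})}v(x)=\inf_{\hat x\in\hat X}\big(a\|x-\hat x\|_1+\sup_{y\in X}(-a\|y-\hat x\|_1+v(y))\big)$ for $x\in X$. $\|g\|_\infty=\sup_{x\in X}|g(x)|$. *)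

From HB Require Import structures.
From mathcomp Require Import all_boot all_order all_algebra.
From mathcomp Require Import all_classical all_reals.
From mathcomp Require Import ereal.
Set Implicit Arguments. Unset Strict Implicit. Unset Printing Implicit Defensive.
Import Order.TTheory GRing.Theory Num.Theory.
Local Open Scope classical_set_scope.
Local Open Scope ring_scope.

Definition l1norm (R : realType) (n : nat) (x : 'rV[R]_n) : R :=
  \sum_(i < n) `|x ord0 i|.

Definition l2norm (R : realType) (n : nat) (x : 'rV[R]_n) : R :=
  Num.sqrt (\sum_(i < n) (x ord0 i) ^+ 2).

Definition rhoX (R : realType) (n : nat) (X P : set 'rV[R]_n) : \bar R :=
  ereal_sup [set ereal_inf [set (l2norm (x - p))%:E | p in P] | x in X].

Definition PZ (R : realType) (n : nat) (a : R) (X Xh : set 'rV[R]_n)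
  (v : 'rV[R]_n -> R) (x : 'rV[R]_n) : \bar R :=
  ereal_inf [set ((a * l1norm (x - xh))%:E
     + ereal_sup [set (- (a * l1norm (y - xh)) + v y)%:E | y in X])%E | xh in Xh].

Definition supnormX (R : realType) (n : nat) (X : set 'rV[R]_n)
  (g : 'rV[R]_n -> \bar R) : \bar R :=
  ereal_sup [set `|g x|%E | x in X].

(* P^- v >= v at every point of X (take y = x in the inner supremum).
   Conversely, since ||.||_2 <= ||.||_1 and a >= L_v, for every xh in Xh the
   inner supremum at xh is at most v x + L_v ||x - xh||_1, so
   P^- v x - v x <= (a + L_v) ||x - xh||_1 <= n (a + L_v) ||x - xh||_2.
   Taking the infimum over xh and the supremum over x gives the bound. *)
From HB Require Import structures.
From mathcomp Require Import all_boot all_order all_algebra.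
From mathcomp Require Import all_classical all_reals.
From mathcomp Require Import ereal.
From mathcomp Require Import lra.
Import Order.TTheory GRing.Theory Num.Theory.
Local Open Scope classical_set_scope.
Local Open Scope ring_scope.

Lemma sumr_sqr_le_sqr_sumr {R : realDomainType} {I : finType} (F : I -> R) :
  (forall i, 0 <= F i) -> \sum_i F i ^+ 2 <= (\sum_i F i) ^+ 2.
Proof.
move=> F_ge0; rewrite [X in _ <= X]expr2 mulr_suml; apply: ler_sum => i _.
rewrite expr2 ler_wpM2l // (bigD1 i) //= lerDl.
exact: sumr_ge0.
Qed.

Section Norms.
Context {R : realType} {n : nat}.
Implicit Types x y : 'rV[R]_n.

Lemma l1norm_ge0 x : 0 <= l1norm x.
Proof. exact: sumr_ge0. Qed.

Lemma l1normD x y : l1norm (x + y) <= l1norm x + l1norm y.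
Proof.
rewrite /l1norm -big_split /=; apply: ler_sum => i _.
by rewrite mxE ler_normD.
Qed.

Lemma l1norm_distC x y : l1norm (x - y) = l1norm (y - x).
Proof. by apply: eq_bigr => i _; rewrite !mxE distrC. Qed.

Lemma l2norm_le_l1norm x : l2norm x <= l1norm x.
Proof.
rewrite /l2norm -(ger0_norm (l1norm_ge0 x)) -sqrtr_sqr ler_sqrt ?sqr_ge0 //.
apply: le_trans (sumr_sqr_le_sqr_sumr _ (fun i => normr_ge0 (x ord0 i))).
by apply: ler_sum => i _; rewrite real_normK ?num_real.
Qed.

Lemma l1norm_le_l2norm x : l1norm x <= n%:R * l2norm x.
Proof.
rewrite mulr_natl -[X in _ *+ X](card_ord n) -sumr_const; apply: ler_sum => i _.
rewrite /l2norm -sqrtr_sqr ler_sqrt; last by apply: sumr_ge0 => j _; apply: sqr_ge0.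
by rewrite (bigD1 i) //= lerDl; apply: sumr_ge0 => j _; apply: sqr_ge0.
Qed.

End Norms.

Lemma lee_mul_ereal_inf (R : realType) (T : Type) (A : set T) (f : T -> R)
    (c r : R) :
  0 <= c -> A !=set0 -> (forall t, A t -> r <= c * f t) ->
  (r%:E <= c%:E * ereal_inf [set (f t)%:E | t in A])%E.
Proof.
move=> c_ge0 [t0 At0] le_rcf; have [c0|c_neq0] := eqVneq c 0.
  by rewrite c0 mul0e lee_fin; have := le_rcf t0 At0; rewrite c0 mul0r.
have c_gt0 : 0 < c by rewrite lt_neqAle eq_sym c_neq0.
rewrite -[r](mulfVK c_neq0) mulrC EFinM lee_wpmul2l ?lee_fin //.
apply: le_ereal_inf_tmp => _ [t At <-].
by rewrite lee_fin ler_pdivrMr // mulrC le_rcf.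
Qed.

Section Projection.
Context {R : realType} {n : nat} {X Xh : set 'rV[R]_n}.
Context {v : 'rV[R]_n -> R} {Lv a : R}.

Let Psup xh := ereal_sup [set (- (a * l1norm (y - xh)) + v y)%:E | y in X].

Lemma PZ_ge x : X x -> ((v x)%:E <= PZ a X Xh v x)%E.
Proof.
move=> Xx; apply: le_ereal_inf_tmp => _ [xh _ <-].
have : ((- (a * l1norm (x - xh)) + v x)%:E <= Psup xh)%E.
  by apply: ereal_sup_ubound; exists x.
move=> /(leeD2l (a * l1norm (x - xh))%:E) /(le_trans _); apply.
by rewrite -EFinD addrA subrr add0r.
Qed.

Hypothesis Lv_ge0 : 0 <= Lv.
Hypothesis Lv_le_a : Lv <= a.
Hypothesis v_lip1 : forall x y, X x -> X y -> v y - v x <= Lv * l1norm (y - x).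

Lemma Psup_le x xh : X x -> (Psup xh <= (v x + Lv * l1norm (x - xh))%:E)%E.
Proof.
move=> Xx; apply: ge_ereal_sup => _ [y Xy <-]; rewrite lee_fin.
have lip := v_lip1 _ _ Xx Xy.
have tri : l1norm (y - x) <= l1norm (y - xh) + l1norm (x - xh).
  by rewrite -[y - x](subrKA xh) [l1norm (x - xh)]l1norm_distC l1normD.
have Lv_tri := ler_wpM2l Lv_ge0 tri.
have := ler_wpM2r (l1norm_ge0 (y - xh)) Lv_le_a.
lra.
Qed.

Lemma PZ_le x xh : X x -> Xh xh ->
  (PZ a X Xh v x <= (v x + (a + Lv) * l1norm (x - xh))%:E)%E.
Proof.
move=> Xx Xhxh; apply: le_trans (_ : (_ + Psup xh)%E <= _)%E.
  by apply: ereal_inf_lbound; exists xh.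
rewrite mulrDl addrCA EFinD; apply: leeD2l.
exact: Psup_le.
Qed.

Lemma abse_sub_PZ_le x : X x -> Xh !=set0 ->
  (`|(v x)%:E - PZ a X Xh v x| <=
   (n%:R * (a + Lv))%:E * ereal_inf [set (l2norm (x - xh))%:E | xh in Xh])%E.
Proof.
move=> Xx [xh0 Xhxh0].
have aLv_ge0 : 0 <= a + Lv by rewrite addr_ge0 // (le_trans Lv_ge0).
move: (PZ_ge x Xx) (fun xh => PZ_le x xh Xx).
case: (PZ a X Xh v x) => [p| |] //= v_le_p p_le; last first.
  by have := p_le _ Xhxh0.
rewrite lee_fin in v_le_p.
rewrite distrC ger0_norm ?subr_ge0 //.
apply: lee_mul_ereal_inf => [||xh Xhxh]; first by rewrite mulr_ge0.
  by exists xh0.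
have := p_le _ Xhxh; rewrite lee_fin -mulrA.
have := ler_wpM2l aLv_ge0 (l1norm_le_l2norm (x - xh)).
lra.
Qed.

End Projection.

Theorem lemma5p10 (R : realType) (n : nat) (X Xh : set 'rV[R]_n)
  (v : 'rV[R]_n -> R) (Lv a : R) :
  (exists M : R, forall x, X x -> l2norm x <= M) ->
  finite_set Xh -> Xh !=set0 ->
  0 <= Lv ->
  (forall x y, X x -> X y -> `|v x - v y| <= Lv * l2norm (x - y)) ->
  Lv <= a ->
  (supnormX X (fun x => ((v x)%:E - PZ a X Xh v x)%E)
    <= ((n%:R * (a + Lv))%:E * rhoX X Xh)%E)%E.
Proof.
move=> _ _ Xh_neq0 Lv_ge0 v_lip Lv_le_a.
have v_lip1 x y : X x -> X y -> v y - v x <= Lv * l1norm (y - x).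
  move=> Xx Xy; apply: le_trans (ler_wpM2l Lv_ge0 (l2norm_le_l1norm _)).
  exact: le_trans (ler_norm _) (v_lip _ _ Xy Xx).
apply: ge_ereal_sup => _ [x Xx <-].
apply: le_trans (abse_sub_PZ_le Lv_ge0 Lv_le_a v_lip1 x Xx Xh_neq0) _.
apply: lee_wpmul2l; first by rewrite lee_fin mulr_ge0 // addr_ge0 // (le_trans Lv_ge0).
rewrite /rhoX; apply: ereal_sup_ubound; exists x => //.
Qed.
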